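(* Let $d\geqslant 2$. Every $(d-1)$-neighborly family $F\subseteq S^d$ of maximum possible size is a partition, i.e., $\sum_{x\in F}2^{j(x)}=2^d$, where $j(x)$ is the number of jokers in $x$.
   Context: Let $S=\{0,1,\ast\}$ and let $S^d$ be the set of strings of length $d$ over $S$; the symbol $\ast$ is called a joker, and $j(x)$ denotes the number of jokers in $x\in S^d$. For $x,y\in S^d$, $d(x,y)$ is the number of positions $i\in[d]$ such that one of $x_i,y_i$ equals $0$ and the other equals $1$. A family $F\subseteq S^d$ is $k$-neighborly if $1\leqslant d(x,y)\leqslant k$ for all distinct $x,y\in F$. A $k$-neighborly family $F$ is called a partition if $\sum_{x\in F}2^{j(x)}=2^d$. ''Maximum possible size'' means that no $(d-1)$-neighborly family in $S^d$ has more elements. *)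

From HB Require Import structures.
From mathcomp Require Import all_boot.
Set Implicit Arguments. Unset Strict Implicit. Unset Printing Implicit Defensive.

Inductive sym := S0 | S1 | Joker.

Definition sym_code (s : sym) : 'I_3 :=
  match s with S0 => inord 0 | S1 => inord 1 | Joker => inord 2 end.
Definition sym_decode (i : 'I_3) : sym :=
  match val i with 0 => S0 | 1 => S1 | _ => Joker end.
Lemma sym_codeK : cancel sym_code sym_decode.
Proof. by case; rewrite /sym_decode /= inordK. Qed.
HB.instance Definition _ := Finite.copy sym (can_type sym_codeK).

Definition word (d : nat) := {ffun 'I_d -> sym}.

Definition jokers d (x : word d) : nat := #|[set i | x i == Joker]|.

Definition opp (a b : sym) : bool :=
  ((a == S0) && (b == S1)) || ((a == S1) && (b == S0)).

Definition dist d (x y : word d) : nat := #|[set i | opp (x i) (y i)]|.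

Definition neighborly d (k : nat) (F : {set word d}) : Prop :=
  forall x y, x \in F -> y \in F -> x != y -> 1 <= dist x y <= k.

Definition is_partition d (F : {set word d}) : Prop :=
  \sum_(x in F) 2 ^ jokers x = 2 ^ d.

From mathcomp Require Import all_boot zify.
Set Implicit Arguments. Unset Strict Implicit. Unset Printing Implicit Defensive.

(* A word x stands for the subcube of {0,1}^d formed by its 2^j(x) completions,
   and d(x,y) >= 1 says exactly that the subcubes of x and y are disjoint, so
   sum 2^j(x) <= 2^d for every 1-separated family.  In a (d-1)-neighborly family
   no two jokerless words are antipodal vertices, so there are at most 2^(d-1)
   of them; as every other word has weight 2^j(x) >= 2, this gives
   2|F| <= sum 2^j(x) + 2^(d-1).  An explicit (d-1)-neighborly family of size
   3 * 2^(d-2) shows that a maximum family has 2|F| >= 3 * 2^(d-1), which forces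
   sum 2^j(x) = 2^d. *)

Lemma eq_symE (a b : sym) :
  (a == b) = match a, b with S0, S0 | S1, S1 | Joker, Joker => true | _, _ => false end.
Proof. by case: a; case: b; first [rewrite eqxx | apply/negbTE/eqP]. Qed.

Lemma oppE (a b : sym) : opp a b = match a, b with S0, S1 | S1, S0 => true | _, _ => false end.
Proof. by rewrite /opp !eq_symE; case: a; case: b. Qed.

Lemma dist_xx d (x : word d) : dist x x = 0.
Proof.
by apply/eqP; rewrite cards_eq0; apply/eqP/setP => i; rewrite !inE oppE; case: (x i).
Qed.

Lemma dist_sym d (x y : word d) : dist x y = dist y x.
Proof. by apply: eq_card => i; rewrite !inE !oppE; case: (x i); case: (y i). Qed.

Lemma dist_between d (x y : word d) i j :
  opp (x i) (y i) -> ~~ opp (x j) (y j) -> 1 <= dist x y <= d - 1.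
Proof.
move=> opp_i opp_j; rewrite card_gt0; apply/andP; split.
  by apply/set0Pn; exists i; rewrite inE.
have -> : d - 1 = #|[set~ j]| by rewrite cardsC1 card_ord subn1.
apply/subset_leq_card/subsetP => k.
by rewrite !inE; apply: contraTneq => ->.
Qed.

Local Notation cube d := {ffun 'I_d -> bool}.

Lemma card_cube d : #|{: cube d}| = 2 ^ d.
Proof. by rewrite card_ffun card_bool card_ord. Qed.

Definition sym_covers (s : sym) (b : bool) : bool :=
  match s with S0 => ~~ b | S1 => b | Joker => true end.

Definition subcube d (x : word d) : {set cube d} :=
  [set p : cube d | [forall i, sym_covers (x i) (p i)]].
Lemma card_sym_covers s : #|sym_covers s| = if s is Joker then 2 else 1.
Proof.
case: s; last by rewrite (eq_card (B := predT)) ?card_bool.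
- by rewrite (eq_card1 (x := false)) // => -[].
- by rewrite (eq_card1 (x := true)) // => -[].
Qed.

Lemma card_subcube d (x : word d) : #|subcube x| = 2 ^ jokers x.
Proof.
rewrite (eq_card (B := family (fun i => sym_covers (x i)))); last first.
  by move=> p; rewrite inE; apply/forallP/familyP.
rewrite card_family foldrE big_image /= -prod_nat_const big_mkcond /=.
rewrite [in RHS]big_mkcond /=; apply: eq_bigr => i _.
by rewrite card_sym_covers inE; case: (x i); rewrite eq_symE.
Qed.

Lemma disjoint_subcube d (x y : word d) :
  0 < dist x y -> [disjoint subcube x & subcube y].
Proof.
rewrite card_gt0 => /set0Pn [i]; rewrite inE => opp_i.
apply/pred0P => p /=; apply/negbTE/andP => -[].
rewrite !inE => /forallP/(_ i) + /forallP/(_ i).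
by move: opp_i; rewrite oppE; case: (x i); case: (y i); case: (p i).
Qed.

Lemma sum_pow_jokers_le d (F : {set word d}) :
  {in F &, forall x y, x != y -> 0 < dist x y} ->
  \sum_(x in F) 2 ^ jokers x <= 2 ^ d.
Proof.
move=> sepF.
have disjF : {in F &, forall x y, x != y -> [disjoint subcube x & subcube y]}.
  by move=> x y Fx Fy /(sepF x y Fx Fy); apply: disjoint_subcube.
have injF : {in F &, injective (@subcube d)}.
  move=> x y Fx Fy eq_xy; case: (eqVneq x y) => // /(disjF x y Fx Fy).
  by rewrite eq_xy -setI_eq0 setIid -cards_eq0 card_subcube expn_eq0.
have trivF : trivIset (@subcube d @: F).
  apply/trivIsetP => _ _ /imsetP [x Fx ->] /imsetP [y Fy ->] neq_xy.
  by apply: disjF Fx Fy _; apply: contraNneq neq_xy => ->.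
under eq_bigr do rewrite -card_subcube.
rewrite -(big_imset (fun A : {set cube d} => #|A|) injF) /=.
move/eqP: trivF => ->.
by rewrite -card_cube max_card.
Qed.

Definition word_of_vertex d (p : cube d) : word d := [ffun i => if p i then S1 else S0].
Definition vertex_of_word d (x : word d) : cube d := [ffun i => x i == S1].
Definition antipode d (p : cube d) : cube d := [ffun i => ~~ p i].

Lemma word_of_vertexK d : cancel (@word_of_vertex d) (@vertex_of_word d).
Proof. by move=> p; apply/ffunP => i; rewrite !ffunE; case: (p i); rewrite eq_symE. Qed.

Lemma vertex_of_wordK d (x : word d) :
  jokers x = 0 -> word_of_vertex (vertex_of_word x) = x.
Proof.
move/eqP; rewrite cards_eq0 => /eqP no_joker; apply/ffunP => i; rewrite !ffunE.
have : i \notin [set i | x i == Joker] by rewrite no_joker inE.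
rewrite inE !eq_symE; by case: (x i).
Qed.

Lemma antipodeK d : involutive (@antipode d).
Proof. by move=> p; apply/ffunP => i; rewrite !ffunE negbK. Qed.

Lemma opp_word_of_vertex d (p q : cube d) i :
  opp (word_of_vertex p i) (word_of_vertex q i) = (p i != q i).
Proof. by rewrite !ffunE oppE; case: (p i); case: (q i). Qed.

Lemma dist_antipode d (p : cube d) :
  dist (word_of_vertex p) (word_of_vertex (antipode p)) = d.
Proof.
rewrite /dist -[RHS]card_ord; apply: eq_card => i.
by rewrite !inE opp_word_of_vertex ffunE; case: (p i).
Qed.

Lemma card_antipode_free_le d (A : {set cube d}) :
  {in A, forall p, antipode p \notin A} -> 2 * #|A| <= 2 ^ d.
Proof.
move=> freeA; rewrite -card_cube mul2n -addnn -{2}(card_imset A (inv_inj (@antipodeK d))).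
have disjA : [disjoint A & @antipode d @: A].
  apply/pred0P => p /=; apply/negbTE/andP => -[Ap /imsetP [q Aq def_p]].
  by move: Ap; rewrite def_p; apply/negP/freeA.
by rewrite -cardsUI disjoint_setI0 // cards0 addn0 max_card.
Qed.

Lemma card_jokerless_le d (F : {set word d}) : 0 < d -> neighborly (d - 1) F ->
  2 * #|[set x in F | jokers x == 0]| <= 2 ^ d.
Proof.
move=> d_gt0 nbF; set P := [set x in F | _].
have PK : {in P, cancel (@vertex_of_word d) (@word_of_vertex d)}.
  by move=> x; rewrite inE => /andP [_ /eqP /vertex_of_wordK].
rewrite -(card_in_imset (can_in_inj PK)); apply: card_antipode_free_le.
move=> _ /imsetP [x Px ->]; apply/imsetP => -[y Py eq_xy].
have dist_xy : dist x y = d by rewrite -(PK x Px) -(PK y Py) -eq_xy dist_antipode.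
have [Fx Fy] : x \in F /\ y \in F by move: Px Py; rewrite !inE => /andP [-> _] /andP [-> _].
have [eq_xy' | neq_xy] := eqVneq x y; first by move: dist_xy; rewrite eq_xy' dist_xx; lia.
by case/andP: (nbF x y Fx Fy neq_xy); rewrite dist_xy; lia.
Qed.

Lemma double_card_le d (F : {set word d}) :
  2 * #|F| <= \sum_(x in F) 2 ^ jokers x + #|[set x in F | jokers x == 0]|.
Proof.
rewrite -sum1_card -sum1dep_card big_mkcondr /= -big_split mul2n -addnn -big_split.
apply: leq_sum => x _; case: (jokers x) => [|j] //=.
by rewrite addn0 expnS leq_pmulr ?expn_gt0.
Qed.

Lemma exists_ffun_neq (I : finType) (T : eqType) (f g : {ffun I -> T}) :
  f != g -> exists i, f i != g i.
Proof.
move=> neq_fg; apply/existsP; apply: contraNT neq_fg => /existsPn eq_fg.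
by apply/eqP/ffunP => i; apply/eqP; rewrite -[_ == _]negbK eq_fg.
Qed.

Section Construction.

Variable n : nat.
Let i0 : 'I_n.+2 := ord0.
Let i1 : 'I_n.+2 := lift ord0 ord0.
Let neq_i01 : i0 != i1 := neq_lift ord0 ord0.

(* The vertices 0w together with the words 1*w, w jokerless: any two of them
   clash somewhere but not in both of the first two coordinates. *)
Let a : word n.+2 := [ffun i => if i == i0 then S0 else Joker].
Let b : word n.+2 := [ffun i => if i == i0 then S1 else if i == i1 then S0 else Joker].
Let star (p : cube n.+2) : word n.+2 :=
  [ffun i => if i == i1 then Joker else word_of_vertex p i].

Let subcube_a p : p \in subcube a -> p i0 = false.
Proof. by rewrite inE => /forallP/(_ i0); rewrite ffunE eqxx; case: (p i0). Qed.

Let subcube_b p : p \in subcube b -> p i0 /\ p i1 = false.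
Proof.
rewrite inE => /forallP sub_b; move: (sub_b i0) (sub_b i1).
by rewrite !ffunE eqxx eq_sym (negbTE neq_i01) eqxx; case: (p i1).
Qed.

Let jokers_a : jokers a = n.+1.
Proof.
rewrite /jokers (_ : [set i | a i == Joker] = [set~ i0]) ?cardsC1 ?card_ord //.
by apply/setP => i; rewrite !inE ffunE; case: (i == i0); rewrite eq_symE.
Qed.

Let jokers_b : jokers b = n.
Proof.
rewrite /jokers (_ : [set i | b i == Joker] = [set~ i0] :\ i1).
  by move: (cardsD1 i1 [set~ i0]); rewrite !inE eq_sym neq_i01 cardsC1 card_ord add1n => -[].
by apply/setP => i; rewrite !inE ffunE; case: (i == i0); case: (i == i1); rewrite ?eq_symE.
Qed.

Let star_inj : {in subcube b &, injective star}.
Proof.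
move=> p q /subcube_b [_ p1] /subcube_b [_ q1] eq_pq; apply/ffunP => i.
have [-> | neq_i] := eqVneq i i1; first by rewrite p1 q1.
have := congr1 (fun x : word n.+2 => x i) eq_pq.
by rewrite !ffunE (negbTE neq_i); case: (p i); case: (q i); rewrite ?eq_symE.
Qed.

Definition three_quarter_family : {set word n.+2} :=
  @word_of_vertex _ @: subcube a :|: star @: subcube b.

Lemma card_three_quarter_family : #|three_quarter_family| = 3 * 2 ^ n.
Proof.
rewrite cardsU (_ : _ :&: _ = set0) ?cards0 ?subn0; last first.
  apply/setP => x; rewrite !inE; apply/negbTE/andP => -[/imsetP [p _ ->] /imsetP [q _]].
  by move/(congr1 (fun x : word n.+2 => x i1)); rewrite !ffunE eqxx; case: (p i1).
rewrite card_imset; last exact: (can_inj (@word_of_vertexK _)).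
by rewrite card_in_imset // !card_subcube jokers_a jokers_b expnS; lia.
Qed.

Lemma neighborly_three_quarter_family : neighborly n.+1 three_quarter_family.
Proof.
have lower_upper p q : p \in subcube a -> q \in subcube b ->
    1 <= dist (word_of_vertex p) (star q) <= n.+1.
  move=> /subcube_a p0 /subcube_b [q0 _]; apply: (dist_between (i := i0) (j := i1)).
    by rewrite !ffunE (negbTE neq_i01) p0 q0 oppE.
  by rewrite !ffunE eqxx oppE; case: (p i1).
move=> x y; case/setUP => /imsetP [p Ap ->]; case/setUP => /imsetP [q Aq ->] neq.
- have [i neq_i] : exists i, p i != q i by apply: exists_ffun_neq; apply: contraNneq neq => ->.
  apply: (dist_between (i := i) (j := i0)); first by rewrite opp_word_of_vertex.
  by rewrite opp_word_of_vertex !subcube_a.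
- exact: lower_upper.
- by rewrite dist_sym lower_upper.
- have [i neq_i] : exists i, p i != q i by apply: exists_ffun_neq; apply: contraNneq neq => ->.
  have neq_i1 : i != i1 by apply: contraNneq neq_i => ->; rewrite (subcube_b Ap).2 (subcube_b Aq).2.
  apply: (dist_between (i := i) (j := i1)); last by rewrite !ffunE eqxx oppE.
  by move: neq_i; rewrite !ffunE (negbTE neq_i1) oppE; case: (p i); case: (q i).
Qed.

End Construction.

Theorem proposition3 (d : nat) (F : {set word d}) :
  2 <= d ->
  neighborly (d - 1) F ->
  (forall G : {set word d}, neighborly (d - 1) G -> #|G| <= #|F|) ->
  is_partition F.
Proof.
case: d F => [|[|n]] F // _ nbF maxF.
have sepF : {in F &, forall x y, x != y -> 0 < dist x y}.
  by move=> x y Fx Fy /(nbF x y Fx Fy) /andP [].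
have le_sum := sum_pow_jokers_le sepF.
have le_jokerless := card_jokerless_le (ltn0Sn _) nbF.
have le_card := double_card_le F.
have := maxF _ (@neighborly_three_quarter_family n).
rewrite card_three_quarter_family /is_partition.
move: le_sum le_jokerless le_card; rewrite !expnS; lia.
Qed.
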